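(* Let $\mathcal{C}_2=\mathbb{C}\{e_1,e_2\}$ be the complex algebra with basis $1,e_1,e_2,e_{12}=e_1e_2$, where $e_1^2=e_2^2=-1$ and $e_1e_2=-e_2e_1$. Let $A\in\mathcal{C}_2^{m\times n}$ be written as $A=A_0+A_1e_1+A_2e_2+A_3e_{12}$ with $A_0,\dots,A_3\in\mathbb{C}^{m\times n}$. For a positive integer $t$ let $$K_{2t}=\frac12\begin{pmatrix}(1-ie_1)I_t & (e_2+ie_{12})I_t\\ (-e_2+ie_{12})I_t & (1+ie_1)I_t\end{pmatrix}.$$ Then $K_{2t}$ is invertible with $K_{2t}^{-1}=K_{2t}$, and $$K_{2m}\begin{pmatrix}A&0\\0&A\end{pmatrix}K_{2n}^{-1}=\begin{pmatrix}A_0+A_1i & -(A_2+A_3i)\\ A_2-A_3i & A_0-A_1i\end{pmatrix}.$$ In particular, if $m=n$ this is a similarity over $\mathcal{C}_2$.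
   Context: $i$ is the imaginary unit of $\mathbb{C}$, commuting with all elements of $\mathcal{C}_2$; $I_t$ is the $t\times t$ identity matrix. *)

From HB Require Import structures.
From mathcomp Require Import all_boot all_order all_algebra.
From mathcomp Require Import ring.
From mathcomp Require Import reals.
From mathcomp Require Import complex.

Set Implicit Arguments.
Unset Strict Implicit.
Unset Printing Implicit Defensive.

Import Order.TTheory GRing.Theory Num.Theory.
Local Open Scope ring_scope.

(* The Clifford algebra  F{e1,e2}  over a commutative ring F:
   elements a0 + a1 e1 + a2 e2 + a3 e12 (e12 = e1 e2),
   with e1^2 = e2^2 = -1 and e1 e2 = - e2 e1. *)
Record cliff2 (F : Type) := Cliff2 { c0 : F; c1 : F; c2 : F; c3 : F }.

Section Cliff2Ring.
Variable F : comNzRingType.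

Definition cl_enc (x : cliff2 F) : F * F * F * F := (c0 x, c1 x, c2 x, c3 x).
Definition cl_dec (p : F * F * F * F) : cliff2 F :=
  let: (a, b, c, d) := p in Cliff2 a b c d.
Lemma cl_encK : cancel cl_enc cl_dec. Proof. by case. Qed.

HB.instance Definition _ := Equality.copy (cliff2 F) (can_type cl_encK).
HB.instance Definition _ := Choice.copy (cliff2 F) (can_type cl_encK).

Definition cl_zero : cliff2 F := Cliff2 0 0 0 0.
Definition cl_one : cliff2 F := Cliff2 1 0 0 0.
Definition cl_opp (x : cliff2 F) := Cliff2 (- c0 x) (- c1 x) (- c2 x) (- c3 x).
Definition cl_add (x y : cliff2 F) :=
  Cliff2 (c0 x + c0 y) (c1 x + c1 y) (c2 x + c2 y) (c3 x + c3 y).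
(* product from the rules e1^2 = e2^2 = e12^2 = -1, e1 e2 = e12 = - e2 e1,
   e1 e12 = - e2, e12 e1 = e2, e2 e12 = e1, e12 e2 = - e1 *)
Definition cl_mul (x y : cliff2 F) :=
  let: Cliff2 a0 a1 a2 a3 := x in let: Cliff2 b0 b1 b2 b3 := y in
  Cliff2 (a0 * b0 - a1 * b1 - a2 * b2 - a3 * b3)
         (a0 * b1 + a1 * b0 + a2 * b3 - a3 * b2)
         (a0 * b2 + a2 * b0 - a1 * b3 + a3 * b1)
         (a0 * b3 + a3 * b0 + a1 * b2 - a2 * b1).

Lemma cl_addA : associative cl_add.
Proof. by move=> [? ? ? ?] [? ? ? ?] [? ? ? ?]; rewrite /cl_add /cl_mul /cl_opp /=; congr Cliff2; ring. Qed.
Lemma cl_addC : commutative cl_add.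
Proof. by move=> [? ? ? ?] [? ? ? ?]; rewrite /cl_add /cl_mul /cl_opp /=; congr Cliff2; ring. Qed.
Lemma cl_add0 : left_id cl_zero cl_add.
Proof. by move=> [? ? ? ?]; rewrite /cl_add /cl_mul /cl_opp /=; congr Cliff2; ring. Qed.
Lemma cl_addN : left_inverse cl_zero cl_opp cl_add.
Proof. by move=> [? ? ? ?]; rewrite /cl_add /cl_mul /cl_opp /=; congr Cliff2; ring. Qed.
Lemma cl_mulA : associative cl_mul.
Proof. by move=> [? ? ? ?] [? ? ? ?] [? ? ? ?]; rewrite /cl_add /cl_mul /cl_opp /=; congr Cliff2; ring. Qed.
Lemma cl_mul1 : left_id cl_one cl_mul.
Proof. by move=> [? ? ? ?]; rewrite /cl_add /cl_mul /cl_opp /=; congr Cliff2; ring. Qed.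
Lemma cl_mulr1 : right_id cl_one cl_mul.
Proof. by move=> [? ? ? ?]; rewrite /cl_add /cl_mul /cl_opp /=; congr Cliff2; ring. Qed.
Lemma cl_mulDl : left_distributive cl_mul cl_add.
Proof. by move=> [? ? ? ?] [? ? ? ?] [? ? ? ?]; rewrite /cl_add /cl_mul /cl_opp /=; congr Cliff2; ring. Qed.
Lemma cl_mulDr : right_distributive cl_mul cl_add.
Proof. by move=> [? ? ? ?] [? ? ? ?] [? ? ? ?]; rewrite /cl_add /cl_mul /cl_opp /=; congr Cliff2; ring. Qed.
Lemma cl_one_neq0 : cl_one != cl_zero.
Proof. by apply/eqP => -[] /eqP; rewrite oner_eq0. Qed.

HB.instance Definition _ := GRing.isNzRing.Build (cliff2 F)
  cl_addA cl_addC cl_add0 cl_addN cl_mulA cl_mul1 cl_mulr1 cl_mulDl cl_mulDr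
  cl_one_neq0.

Definition cl_sc (a : F) : cliff2 F := Cliff2 a 0 0 0.
Definition e1 : cliff2 F := Cliff2 0 1 0 0.
Definition e2 : cliff2 F := Cliff2 0 0 1 0.
Definition e12 : cliff2 F := e1 * e2.

End Cliff2Ring.

Arguments e1 {F}.
Arguments e2 {F}.
Arguments e12 {F}.

Notation C2 R := (cliff2 (R : realType)[i]).

Definition cmp0 (R : realType) m n (A : 'M[C2 R]_(m, n)) := map_mx (@c0 _) A.
Definition cmp1 (R : realType) m n (A : 'M[C2 R]_(m, n)) := map_mx (@c1 _) A.
Definition cmp2 (R : realType) m n (A : 'M[C2 R]_(m, n)) := map_mx (@c2 _) A.
Definition cmp3 (R : realType) m n (A : 'M[C2 R]_(m, n)) := map_mx (@c3 _) A.

Definition to_C2 (R : realType) m n (M : 'M[R[i]]_(m, n)) : 'M[C2 R]_(m, n) :=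
  map_mx (@cl_sc _) M.

Definition Kmx (R : realType) (t : nat) : 'M[C2 R]_(t + t) :=
  let ii : C2 R := cl_sc 'i%C in
  let h : C2 R := cl_sc (2%:R^-1) in
  block_mx ((h * (1 - ii * e1))%:M) ((h * (e2 + ii * e12))%:M)
           ((h * (- e2 + ii * e12))%:M) ((h * (1 + ii * e1))%:M).

From HB Require Import structures.
From mathcomp Require Import all_boot all_order all_algebra.
From mathcomp Require Import reals complex ring.
Import GRing.Theory Num.Theory.
Local Open Scope ring_scope.

(* Every block of K_{2t} is a scalar matrix k_rs I_t with k_rs in C{e1,e2}, so
   K_{2t} acts entrywise through the 2x2 matrix k = (k_rs), and both claims
   reduce to identities in C{e1,e2}: k^2 = 1, and the sandwiches
   k_r1 a k_1s + k_r2 a k_2s pick out a0 + i a1, -(a2 + i a3), a2 - i a3 and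
   a0 - i a1 from a = a0 + a1 e1 + a2 e2 + a3 e12.  In coordinates these are
   polynomial identities that only use i^2 = -1 and the invertibility of 2. *)

Section ScalarBlockMatrices.
Variable T : pzRingType.

Lemma mul_scalar_mx_mx_scalar m n (x y : T) (A : 'M[T]_(m, n)) :
  x%:M *m A *m y%:M = map_mx (fun a => x * a * y) A.
Proof.
apply/matrixP => i j; rewrite mul_scalar_mx !mxE (bigD1 j) //= big1 => [|k /negbTE nkj].
  by rewrite !mxE eqxx mulr1n addr0.
by rewrite !mxE nkj mulr0n mulr0.
Qed.

Lemma mul_scalar_block_mx t (a b c d a' b' c' d' : T) :
  block_mx a%:M b%:M c%:M d%:M *m block_mx a'%:M b'%:M c'%:M d'%:M =
  block_mx (a * a' + b * c')%:M (a * b' + b * d')%:M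
           (c * a' + d * c')%:M (c * b' + d * d')%:M :> 'M_(t + t).
Proof. by rewrite mulmx_block !raddfD -!scalar_mxM. Qed.

Lemma scalar_block_mx_conj_diag m n (a b c d a' b' c' d' : T) (A : 'M[T]_(m, n)) :
  block_mx a%:M b%:M c%:M d%:M *m block_mx A 0 0 A *m block_mx a'%:M b'%:M c'%:M d'%:M =
  block_mx (map_mx (fun x => a * x * a' + b * x * c') A)
           (map_mx (fun x => a * x * b' + b * x * d') A)
           (map_mx (fun x => c * x * a' + d * x * c') A)
           (map_mx (fun x => c * x * b' + d * x * d') A).
Proof.
rewrite !mulmx_block ?mulmx0 ?mul0mx ?addr0 ?add0r !mul_scalar_mx_mx_scalar.
by congr block_mx; apply/matrixP => i j; rewrite !mxE.
Qed.

End ScalarBlockMatrices.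

Section CliffordK.
Context {F : fieldType} (i : F).
Hypotheses (sqr_i : i ^+ 2 = -1) (two_neq0 : 2 != 0 :> F).

Let half : F := 2^-1.

Definition k11 : cliff2 F := cl_sc half * (1 - cl_sc i * e1).
Definition k12 : cliff2 F := cl_sc half * (e2 + cl_sc i * e12).
Definition k21 : cliff2 F := cl_sc half * (- e2 + cl_sc i * e12).
Definition k22 : cliff2 F := cl_sc half * (1 + cl_sc i * e1).

Ltac cliff2_ring := rewrite /e12 /e1 /e2 /cl_sc; cbn; congr Cliff2; ring.

Lemma k11E : k11 = Cliff2 half (- (half * i)) 0 0. Proof. by cliff2_ring. Qed.
Lemma k12E : k12 = Cliff2 0 0 half (half * i). Proof. by cliff2_ring. Qed.
Lemma k21E : k21 = Cliff2 0 0 (- half) (half * i). Proof. by cliff2_ring. Qed.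
Lemma k22E : k22 = Cliff2 half (half * i) 0 0. Proof. by cliff2_ring. Qed.

Ltac cliff2_field :=
  rewrite ?k11E ?k12E ?k21E ?k22E /half /cl_sc; cbn;
  congr Cliff2; cbn; field: sqr_i; exact: two_neq0.

Lemma k_involutive :
  [/\ k11 * k11 + k12 * k21 = 1, k11 * k12 + k12 * k22 = 0,
      k21 * k11 + k22 * k21 = 0 & k21 * k12 + k22 * k22 = 1].
Proof. by split; cliff2_field. Qed.

Lemma k_conj (a : cliff2 F) :
  [/\ k11 * a * k11 + k12 * a * k21 = cl_sc (c0 a + i * c1 a),
      k11 * a * k12 + k12 * a * k22 = - cl_sc (c2 a + i * c3 a),
      k21 * a * k11 + k22 * a * k21 = cl_sc (c2 a - i * c3 a) &
      k21 * a * k12 + k22 * a * k22 = cl_sc (c0 a - i * c1 a)].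
Proof. by case: a => a0 a1 a2 a3; split; cliff2_field. Qed.

End CliffordK.

Theorem theorem10 (R : realType) (m n : nat) (A : 'M[C2 R]_(m, n)) :
  (0 < m)%N -> (0 < n)%N ->
  (forall t : nat, (0 < t)%N -> Kmx R t *m Kmx R t = 1%:M) /\
  Kmx R m *m block_mx A 0 0 A *m Kmx R n =
  block_mx (to_C2 (cmp0 A + 'i%C *: cmp1 A))
           (- to_C2 (cmp2 A + 'i%C *: cmp3 A))
           (to_C2 (cmp2 A - 'i%C *: cmp3 A))
           (to_C2 (cmp0 A - 'i%C *: cmp1 A)).
Proof.
move=> _ _.
have two_neq0 : 2 != 0 :> R[i] by rewrite pnatr_eq0.
have KE t : Kmx R t = block_mx (k11 'i)%:M (k12 'i)%:M (k21 'i)%:M (k22 'i)%:M by [].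
split=> [t _|].
  rewrite KE mul_scalar_block_mx.
  have [-> -> -> ->] := k_involutive 'i%C (sqr_i R) two_neq0.
  by rewrite raddf0 -scalar_mx_block.
rewrite !KE scalar_block_mx_conj_diag.
by congr block_mx; apply/matrixP => r s; rewrite !mxE;
  have [? ? ? ?] := k_conj 'i%C (sqr_i R) two_neq0 (A r s).
Qed.
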